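(* Let $n$ be a natural number and let $h=F_{6n-1}$, $k=F_{6n+1}$, where $F_m$ is the $m$-th Fibonacci number. Suppose $h,k$ are positive integers with $\gcd(h,k)=1$ and $\{h,k\}$ is a symmetric pair. Then $$kB_{1}(h,k)+hB_{1}(k,h)=\frac{h^{2}-h-k+k^{2}}{2}-hk+1.$$
   Context: The Fibonacci numbers are given by $F_0=0$, $F_1=1$, $F_{m+1}=F_m+F_{m-1}$ (equivalently $\frac{x}{1-x-x^2}=\sum_{m\ge0}F_mx^m$). $[x]$ denotes the greatest integer $\le x$, and $((x))=x-[x]-\tfrac12$ if $x\notin\mathbb{Z}$, $((x))=0$ if $x\in\mathbb{Z}$. The Dedekind sum is $s(a,b)=\sum_{j=1}^{b-1}\left(\left(\frac{aj}{b}\right)\right)\left(\left(\frac{j}{b}\right)\right)$ for integers $a$ and $b>0$; a pair $\{h,k\}$ of positive integers is called a symmetric pair if $s(h,k)=s(k,h)$. For coprime positive integers $a,b$, $$B_{1}(a,b)=\sum_{j=1}^{b-1}(-1)^{j+\left[\frac{aj}{b}\right]}\left[\frac{aj}{b}\right].$$ *)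

From mathcomp Require Import all_boot all_order all_algebra.
Set Implicit Arguments. Unset Strict Implicit. Unset Printing Implicit Defensive.
Import Order.TTheory GRing.Theory Num.Theory.
Local Open Scope ring_scope.

Fixpoint fib (m : nat) : nat :=
  match m with
  | 0 => 0%N
  | 1 => 1%N
  | (m'.+1 as m1).+1 => (fib m1 + fib m')%N
  end.

Definition saw (x : rat) : rat :=
  if x \is a Num.int then 0 else x - (Num.floor x)%:~R - 1 / 2.

Definition dedekind_sum (a : int) (b : nat) : rat :=
  \sum_(1 <= j < b) saw ((a * j%:Z)%:~R / b%:R) * saw (j%:R / b%:R).

Definition symmetric_pair (h k : nat) : Prop :=
  dedekind_sum h%:Z k = dedekind_sum k%:Z h.

Definition B1 (a b : nat) : int :=
  \sum_(1 <= j < b)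
     let q : int := Num.floor ((a * j)%:R / b%:R : rat) in
     (-1) ^ (j%:Z + q) * q.

(* Write B for B_1.  For odd coprime a, b, substituting
   [aj/b] = (aj - (aj mod b))/b and permuting j -> aj mod b expresses b B(a,b)
   through S(a,b) = sum_j j (-1)^(aj mod b).  In B(h,k) we instead group the j
   by the value q of [hj/k]: each block is an alternating sum over
   ceil(qk/h) <= j < ceil((q+1)k/h), and summation by parts turns the result
   into S(k,h) again, with the opposite sign.  Eliminating S gives
   2(k B(h,k) + h B(k,h)) = (h-1)(k-1).  For h = F_(6n-1), k = F_(6n+1), both
   odd, Cassini's identity yields h^2 + k^2 + 1 = 3hk, which turns the claimed
   right-hand side into (h-1)(k-1)/2. *)

From mathcomp Require Import all_boot all_order all_algebra.
From mathcomp Require Import zify ring lra.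
Import Order.TTheory GRing.Theory Num.Theory.
Local Open Scope ring_scope.

Lemma floor_natr_div (a b : nat) : (0 < b)%N ->
  Num.floor (a%:R / b%:R : rat) = (a %/ b)%:Z.
Proof.
move=> b_gt0; apply: floor_def.
have b_pos : (0 : rat) < b%:R by rewrite ltr0n.
rewrite intrD !pmulrn ler_pdivlMr // ltr_pdivrMr //.
rewrite -!natrM -natrD -natrM ler_nat ltr_nat.
apply/andP; split.
  by rewrite {2}(divn_eq a b) leq_addr.
by rewrite {1}(divn_eq a b) mulnDl mul1n ltn_add2l ltn_pmod.
Qed.

Lemma B1E (a b : nat) : (0 < b)%N ->
  B1 a b = \sum_(0 <= j < b) (-1) ^+ (j + a * j %/ b) * (a * j %/ b)%:Z.
Proof.
move=> b_gt0; rewrite /B1 [in RHS]big_ltn // muln0 div0n mulr0 add0r.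
by apply: eq_big_nat => j _ /=; rewrite floor_natr_div.
Qed.

Lemma fibSS m : fib m.+2 = (fib m.+1 + fib m)%N.
Proof. by []. Qed.

Lemma odd_fib m : odd (fib m) = ~~ (3 %| m)%N.
Proof.
elim/ltn_ind: m => -[|[|m]] IH //.
rewrite fibSS oddD !IH //; move: (ltn_pmod m (isT : (0 < 3)%N)).
rewrite /dvdn -[m.+2]addn2 -[m.+1]addn1 -(modnDml m 1) -(modnDml m 2).
by case: (m %% 3)%N => [|[|[|]]].
Qed.

Lemma fib_cassini m :
  (fib m)%:Z * (fib m.+2)%:Z - (fib m.+1)%:Z ^+ 2 = (-1) ^+ m.+1.
Proof.
elim: m => [|m IH] //.
by rewrite [(-1) ^+ _]exprS -IH fibSS [fib m.+2]fibSS !PoszD; ring.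
Qed.

Lemma fib_markov m : odd m ->
  (fib m)%:Z ^+ 2 + (fib m.+2)%:Z ^+ 2 + 1 = 3 * (fib m)%:Z * (fib m.+2)%:Z.
Proof.
move=> m_odd; have sign1 : ((-1) ^+ m.+1 : int) = 1.
  by rewrite -signr_odd oddS m_odd.
rewrite -[X in _ + X = _]sign1 -fib_cassini.
by rewrite fibSS PoszD; ring.
Qed.

Lemma sum_mulmod_perm (R : nmodType) (a b : nat) (F : nat -> R) :
  (0 < b)%N -> coprime a b ->
  \sum_(0 <= j < b) F (a * j %% b)%N = \sum_(0 <= j < b) F j.
Proof.
move=> b_gt0 ab_coprime; rewrite !big_mkord.
pose f (j : 'I_b) : 'I_b := Ordinal (ltn_pmod (a * j) b_gt0).
suff f_inj : injective f by rewrite [RHS](reindex_inj f_inj).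
move=> i j /(congr1 val) /=.
wlog le_ij : i j / (i <= j)%N.
  move=> IH; case: (leqP i j) => [/IH //|/ltnW/IH IHji /esym/IHji //].
move=> /eqP; rewrite eq_sym eqn_mod_dvd ?leq_mul2l ?le_ij ?orbT // -mulnBr.
rewrite Gauss_dvdr 1?coprime_sym // /dvdn modn_small => [/eqP ji|].
  by apply: ord_inj; lia.
by have := ltn_ord j; lia.
Qed.

Lemma sum_sign_range (a b : nat) : (a <= b)%N ->
  2 * \sum_(a <= j < b) ((-1) ^+ j : int) = (-1) ^+ a - (-1) ^+ b.
Proof.
move=> /subnK <-; elim: (b - a)%N => [|m IH].
  by rewrite add0n big_geq // mulr0 subrr.
by rewrite addSn big_nat_recr ?leq_addl //= mulrDr IH exprS; ring.
Qed.

Lemma sum_sign_odd m : odd m -> \sum_(0 <= j < m) ((-1) ^+ j : int) = 1.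
Proof.
move=> m_odd; apply: (@mulfI _ 2) => //.
by rewrite sum_sign_range // -[(-1) ^+ m]signr_odd m_odd; ring.
Qed.

Lemma sum_index_sign_odd m : odd m ->
  2 * \sum_(0 <= j < m) j%:Z * (-1) ^+ j = m%:Z - 1.
Proof.
move=> m_odd; rewrite -(odd_double_half m) m_odd add1n.
elim: m./2 => [|p IH]; first by rewrite big_nat1 mulr0.
rewrite doubleS big_nat_recr //= big_nat_recr //= !mulrDr IH.
by rewrite !intS !exprS -signr_odd odd_double; ring.
Qed.

Lemma sign_add_quo (a b j : nat) : odd a -> odd b ->
  ((-1) ^+ (j + a * j %/ b) : int) = (-1) ^+ (a * j %% b).
Proof.
move=> a_odd b_odd; rewrite -signr_odd -[in RHS]signr_odd; congr (_ ^+ _).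
move: (congr1 odd (divn_eq (a * j) b)); rewrite oddD !oddM a_odd b_odd /= andbT.
by rewrite oddD => ->; case: (odd _); case: (odd _).
Qed.

Definition rem_sign_sum (a b : nat) : int :=
  \sum_(0 <= j < b) j%:Z * (-1) ^+ (a * j %% b).

Lemma B1_rem_sign_sum (a b : nat) :
  odd a -> odd b -> coprime a b -> (0 < b)%N ->
  2 * b%:Z * B1 a b = 2 * a%:Z * rem_sign_sum a b - (b%:Z - 1).
Proof.
move=> a_odd b_odd ab_coprime b_gt0.
have mul_B1 : b%:Z * B1 a b =
    a%:Z * rem_sign_sum a b -
    \sum_(0 <= j < b) (a * j %% b)%N%:Z * (-1) ^+ (a * j %% b).
  rewrite B1E // /rem_sign_sum !mulr_sumr -sumrB; apply: eq_big_nat => j _.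
  have euclid : (a * j %/ b)%N%:Z * b%:Z = a%:Z * j%:Z - (a * j %% b)%N%:Z.
    by apply/eqP; rewrite eq_sym subr_eq -!PoszM -PoszD -divn_eq.
  by rewrite sign_add_quo // mulrCA [b%:Z * _]mulrC euclid; ring.
rewrite -mulrA mul_B1 mulrBr mulrA.
rewrite (@sum_mulmod_perm _ a b (fun r => r%:Z * (-1) ^+ r)) //.
by rewrite sum_index_sign_odd.
Qed.

Lemma sum_sign_mulmod (a b : nat) : odd b -> coprime a b ->
  \sum_(1 <= q < b) ((-1) ^+ (a * q %% b) : int) = 0.
Proof.
move=> b_odd ab_coprime; have b_gt0 := odd_gt0 b_odd.
have := @sum_mulmod_perm int a b (fun r => (-1) ^+ r) b_gt0 ab_coprime.
rewrite sum_sign_odd // big_ltn // muln0 mod0n expr0 => sum1.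
by apply: (addrI 1); rewrite addr0.
Qed.

Lemma sum_index_mul_adjacent (g : nat -> int) H :
  \sum_(0 <= q < H) q%:Z * (g q + g q.+1) =
  \sum_(0 <= q < H) (2 * q%:Z - 1) * g q + (H%:Z - 1) * g H + g 0%N.
Proof.
elim: H => [|H IH]; first by rewrite !big_geq // mulN1r; ring.
by rewrite !big_nat_recr //= IH intS; ring.
Qed.

Section BlockDecomposition.

Variables h k : nat.
Hypotheses (h_gt0 : (0 < h)%N) (k_gt0 : (0 < k)%N).

Definition first_index (q : nat) : nat := (q * k + (h - 1)) %/ h.

Lemma first_index_leq q j : (first_index q <= j)%N = (q * k <= j * h)%N.
Proof.
rewrite /first_index leqNgt -[(j < _)%N]/(j.+1 <= _)%N leq_divRL // mulSn.
by apply/negP/idP; lia.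
Qed.

Lemma first_index0 : first_index 0 = 0%N.
Proof. by rewrite /first_index mul0n add0n divn_small //; lia. Qed.

Lemma first_index_h : first_index h = k.
Proof. by rewrite /first_index mulnC divnMDl // divn_small ?addn0 //; lia. Qed.

Lemma first_index_mono : {homo first_index : q q' / (q <= q')%N}.
Proof.
by move=> q q' le_qq'; rewrite leq_div2r // leq_add2r leq_mul2r le_qq' orbT.
Qed.

Lemma quo_first_index q j :
  (first_index q <= j < first_index q.+1)%N -> (h * j %/ k)%N = q.
Proof.
rewrite ltnNge !first_index_leq mulSn => /andP [le_qj /negP lt_jq].
apply/eqP; rewrite eqn_leq -ltnS ltn_divLR // leq_divRL //.
by apply/andP; split; lia.
Qed.

Lemma sum_first_index_blocks (F : nat -> int) Q :
  \sum_(0 <= j < first_index Q) F j =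
  \sum_(0 <= q < Q) \sum_(first_index q <= j < first_index q.+1) F j.
Proof.
elim: Q => [|Q IH]; first by rewrite first_index0 !big_geq.
rewrite big_nat_recr //= -IH (big_cat_nat _ (n := first_index Q)) //.
exact: first_index_mono.
Qed.

Lemma B1_blocks : 2 * B1 h k = \sum_(0 <= q < h)
  q%:Z * ((-1) ^+ (q + first_index q) + (-1) ^+ (q.+1 + first_index q.+1)).
Proof.
rewrite B1E // -[in X in \sum_(0 <= j < X) _]first_index_h.
rewrite sum_first_index_blocks mulr_sumr; apply: eq_big_nat => q _.
have -> : \sum_(first_index q <= j < first_index q.+1)
              (-1) ^+ (j + h * j %/ k) * (h * j %/ k)%N%:Z
          = q%:Z * (-1) ^+ q *
            \sum_(first_index q <= j < first_index q.+1) (-1) ^+ j.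
  rewrite mulr_sumr; apply: eq_big_nat => j /quo_first_index ->.
  by rewrite exprD; ring.
by rewrite mulrCA sum_sign_range ?first_index_mono // !exprD exprS; ring.
Qed.

Section OddCoprime.

Hypotheses (h_odd : odd h) (k_odd : odd k) (hk_coprime : coprime h k).

Lemma sign_first_index q : (0 < q < h)%N ->
  ((-1) ^+ (q + first_index q) : int) = - (-1) ^+ (k * q %% h).
Proof.
case/andP => q_gt0 lt_qh; set r := (k * q %% h)%N; set f := (k * q %/ h)%N.
have r_gt0 : (0 < r)%N.
  rewrite lt0n; apply: contraTneq lt_qh => r0; rewrite -leqNgt.
  by apply: (dvdn_leq q_gt0); rewrite -(Gauss_dvdr _ hk_coprime) /dvdn -/r r0.
have -> : first_index q = f.+1.
  rewrite /first_index mulnC {1}(divn_eq (k * q) h) -/r -/f.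
  have -> : (f * h + r + (h - 1) = f.+1 * h + (r - 1))%N by rewrite mulSn; lia.
  rewrite divnMDl // divn_small ?addn0 //.
  by have := ltn_pmod (k * q) h_gt0; lia.
by rewrite addnS exprS mulN1r sign_add_quo.
Qed.

Lemma B1_rem_sign_sum_dual : 2 * B1 h k = (h%:Z - 1) - 2 * rem_sign_sum k h.
Proof.
rewrite B1_blocks sum_index_mul_adjacent first_index_h first_index0.
have -> : ((-1) ^+ (h + k) : int) = 1 by rewrite -signr_odd oddD h_odd k_odd.
rewrite big_ltn // first_index0 /rem_sign_sum [in RHS]big_ltn // mul0r add0r.
have -> : \sum_(1 <= q < h) (2 * q%:Z - 1) * (-1) ^+ (q + first_index q) =
          \sum_(1 <= q < h)
            (- 2 * (q%:Z * (-1) ^+ (k * q %% h)) + (-1) ^+ (k * q %% h)).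
  by apply: eq_big_nat => q q_range; rewrite sign_first_index //; ring.
rewrite big_split /= sum_sign_mulmod 1?coprime_sym // -mulr_sumr; ring.
Qed.

End OddCoprime.

End BlockDecomposition.

Lemma B1_reciprocity_odd (h k : nat) : odd h -> odd k -> coprime h k ->
  2 * (k%:Z * B1 h k + h%:Z * B1 k h) = (h%:Z - 1) * (k%:Z - 1).
Proof.
move=> h_odd k_odd hk_coprime.
have [h_gt0 k_gt0] : (0 < h)%N /\ (0 < k)%N by rewrite !odd_gt0.
have kh_coprime : coprime k h by rewrite coprime_sym.
rewrite mulrDr mulrCA B1_rem_sign_sum_dual // mulrA B1_rem_sign_sum //; ring.
Qed.

Theorem theorem25 (n h k : nat) :
  (0 < n)%N ->
  h = fib (6 * n - 1) -> k = fib (6 * n + 1) ->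
  (0 < h)%N -> (0 < k)%N -> coprime h k ->
  symmetric_pair h k ->
  (k%:R * (B1 h k)%:~R + h%:R * (B1 k h)%:~R : rat)
    = ((h%:R ^+ 2 - h%:R - k%:R + k%:R ^+ 2) / 2 - h%:R * k%:R + 1).
Proof.
move=> n_gt0 h_def k_def _ _ hk_coprime _.
have m_odd : odd (6 * n - 1)%N by lia.
have h_odd : odd h by rewrite h_def odd_fib; lia.
have k_odd : odd k by rewrite k_def odd_fib; lia.
have markov : h%:Z ^+ 2 + k%:Z ^+ 2 + 1 = 3 * h%:Z * k%:Z.
  by rewrite h_def k_def (_ : 6 * n + 1 = (6 * n - 1).+2)%N ?fib_markov //; lia.
have := B1_reciprocity_odd _ _ h_odd k_odd hk_coprime.
move: markov => /(congr1 (intr : int -> rat)) + /(congr1 (intr : int -> rat)).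
by rewrite !(intrD, intrM, intrB, pmulrn) /=; lra.
Qed.
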